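(* Let $G$ be an abelian group and $\precsim$ a total quasi-order on $G$. Then $\precsim$ is compatible with $+$ if and only if there exist abelian groups $A$ and $F$ and an exact sequence $0\to A\xrightarrow{\iota}G\xrightarrow{\pi}F\to0$, a group order $\leq_o$ on $A$ (making $(A,\leq_o)$ an ordered abelian group) and a valuation $v$ on $F$ such that for all $g,h\in G$: $g\precsim h\Leftrightarrow \big(g,h\in\iota(A)\wedge\iota^{-1}(g)\leq_o\iota^{-1}(h)\big)\vee\big(h\notin\iota(A)\wedge v(\pi(g))\geq v(\pi(h))\big).$
   Context: A quasi-order is a reflexive transitive relation; total means any two elements are comparable. $a\sim b$ means $a\precsim b\wedge b\precsim a$. $\precsim$ is compatible with $+$ if $(Q_1)$: $x\sim0\Rightarrow x=0$, and $(Q_2)$: $x\precsim y\wedge y\not\sim z\Rightarrow x+z\precsim y+z$, for all $x,y,z\in G$. A valuation on an abelian group $F$ is a map $v:F\to\Gamma\cup\{\infty\}$ ($\Gamma$ totally ordered, $\infty$ above $\Gamma$) with $v(a)=\infty\Leftrightarrow a=0$, $v(a+b)\ge\min(v(a),v(b))$, $v(-a)=v(a)$. *)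

From HB Require Import structures.
From mathcomp Require Import all_boot all_order all_algebra.
Set Implicit Arguments. Unset Strict Implicit. Unset Printing Implicit Defensive.
Import Order.TTheory GRing.Theory Num.Theory.
Local Open Scope ring_scope.

Definition quasi_order (T : Type) (le : T -> T -> Prop) : Prop :=
  (forall x, le x x) /\ (forall x y z, le x y -> le y z -> le x z).

Definition total_rel (T : Type) (le : T -> T -> Prop) : Prop :=
  forall x y, le x y \/ le y x.

Definition qsim (T : Type) (le : T -> T -> Prop) (x y : T) : Prop :=
  le x y /\ le y x.

(* (Q1) and (Q2) *)
Definition compatible_add (G : zmodType) (le : G -> G -> Prop) : Prop :=
  (forall x : G, qsim le x 0 -> x = 0) /\
  (forall x y z : G, le x y -> ~ qsim le y z -> le (x + z) (y + z)).

Definition group_order (A : zmodType) (leo : A -> A -> Prop) : Prop :=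
  (forall x, leo x x) /\
  (forall x y, leo x y -> leo y x -> x = y) /\
  (forall x y z, leo x y -> leo y z -> leo x z) /\
  (forall x y, leo x y \/ leo y x) /\
  (forall x y z, leo x y -> leo (x + z) (y + z)).

(* Gamma ∪ {∞} is modelled as option Gamma, with None = ∞ above Gamma. *)
Definition ole (d : Order.disp_t) (Gam : orderType d) (a b : option Gam) : Prop :=
  match b with
  | None => True
  | Some y => match a with None => False | Some x => (x <= y)%O end
  end.

Definition omin (d : Order.disp_t) (Gam : orderType d) (a b : option Gam) : option Gam :=
  match a, b with
  | None, _ => b
  | _, None => a
  | Some x, Some y => Some (Order.min x y)
  end.

Definition valuation (F : zmodType) (d : Order.disp_t) (Gam : orderType d)
  (v : F -> option Gam) : Prop :=
  (forall a, v a = None <-> a = 0) /\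
  (forall a b, ole (omin (v a) (v b)) (v (a + b))) /\
  (forall a, v (- a) = v a).

Definition short_exact (A G F : zmodType) (iota : {additive A -> G})
  (pi : {additive G -> F}) : Prop :=
  injective iota /\ (forall y : F, exists g, pi g = y) /\
  (forall g : G, (exists a, iota a = g) <-> pi g = 0).

(* Call g oriented when g ∼ -g forces g = 0.  Using (Q1) and (Q2) one shows
   that the oriented elements form a subgroup A on which ∼ is equality and ≾ is
   translation invariant, hence a group order, and that every non-oriented g
   lies strictly above A, satisfies g ∼ -g and g + a ∼ g for a in A, and
   g + h ≾ h whenever g ≾ h.  So the ∼-classes of non-oriented elements,
   ordered reversely, are the values of a valuation on G/A that is ∞ exactly
   on A, and ≾ is recovered from the order on A and this valuation.
   Conversely, (Q2) outside A comes from v(a + b) = v(b) when v(a) > v(b). *)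

From HB Require Import structures.
From mathcomp Require Import all_boot all_order all_algebra.
From mathcomp Require Import boolp.
Set Implicit Arguments. Unset Strict Implicit. Unset Printing Implicit Defensive.
Import Order.TTheory GRing.Theory Num.Theory.
Local Open Scope ring_scope.
Local Open Scope quotient_scope.

Section OptionOrder.
Variables (d : Order.disp_t) (Gam : orderType d).
Implicit Types a b c : option Gam.

Lemma ole_refl a : ole a a.
Proof. by case: a => /=. Qed.

Lemma ole_trans a b c : ole a b -> ole b c -> ole a c.
Proof. by case: c => [z|] //; case: b => [y|] //; case: a => [x|] //=; apply: le_trans. Qed.

Lemma ole_total a b : ole a b \/ ole b a.
Proof.
case: a => [x|]; case: b => [y|] /=; try by [left|right].
by case/orP: (le_total x y); [left|right].
Qed.

Lemma ole_anti a b : ole a b -> ole b a -> a = b.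
Proof. by case: a => [x|]; case: b => [y|] //= xy yx; rewrite (@le_anti _ _ x y) ?xy. Qed.

Lemma omin_cases a b : (omin a b = a /\ ole a b) \/ (omin a b = b /\ ole b a).
Proof.
case: a => [x|]; case: b => [y|] /=; try by [left|right].
by case: (leP x y) => [xy|/ltW yx]; [left|right].
Qed.

End OptionOrder.

Section Valuation.
Variables (F : zmodType) (d : Order.disp_t) (Gam : orderType d) (v : F -> option Gam).
Hypothesis v_valuation : valuation v.

Lemma valuationD_strict a b : ~ ole (v a) (v b) -> v (a + b) = v b.
Proof.
have [_ [vD vN]] := v_valuation => vba.
have vb_le : ole (v b) (v (a + b)).
  by case: (omin_cases (v a) (v b)) => [[_ /vba]|[<- _]] //; apply: vD.
apply: ole_anti => //; have := vD (a + b) (- a).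
rewrite addrAC subrr add0r vN.
by case: (omin_cases (v (a + b)) (v a)) => [[-> _]|[-> _ /vba]].
Qed.

End Valuation.

Section SubgroupQuotient.
Variables (G : zmodType) (S : zmodClosed G).

Definition eqmod_subgroup : rel G := fun x y => x - y \in S.

Lemma eqmod_subgroup_refl : reflexive eqmod_subgroup.
Proof. by move=> x; rewrite /eqmod_subgroup subrr rpred0. Qed.

Lemma eqmod_subgroup_sym : symmetric eqmod_subgroup.
Proof. by move=> x y; rewrite /eqmod_subgroup -opprB rpredN. Qed.

Lemma eqmod_subgroup_trans : transitive eqmod_subgroup.
Proof. by move=> y x z xy yz; rewrite /eqmod_subgroup -(subrKA y) rpredD. Qed.

Canonical eqmod_subgroup_equiv :=
  EquivRel eqmod_subgroup eqmod_subgroup_refl eqmod_subgroup_sym eqmod_subgroup_trans.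

Definition quot_subgroup := {eq_quot eqmod_subgroup}.
HB.instance Definition _ := Choice.on quot_subgroup.
HB.instance Definition _ := EqQuotient.on quot_subgroup.

Local Notation Q := quot_subgroup.

Lemma eqmod_subgroupP x y : reflect (\pi_Q x = \pi_Q y) (x - y \in S).
Proof. exact: eqquotP. Qed.

Lemma repr_piB_subgroup x : repr (\pi_Q x) - x \in S.
Proof. by apply/eqmod_subgroupP; rewrite reprK. Qed.

Definition quot_zero : Q := lift_cst Q 0.
Canonical pi_quot_zero := PiConst quot_zero.

Definition quot_opp := lift_op1 Q -%R.

Lemma pi_quot_opp : {morph \pi_Q : x / - x >-> quot_opp x}.
Proof.
move=> x; unlock quot_opp; apply/eqmod_subgroupP.
by rewrite opprK addrC repr_piB_subgroup.
Qed.
Canonical pi_quot_opp_morph := PiMorph1 pi_quot_opp.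

Definition quot_add := lift_op2 Q +%R.

Lemma pi_quot_add : {morph \pi_Q : x y / x + y >-> quot_add x y}.
Proof.
move=> x y; unlock quot_add; apply/eqmod_subgroupP.
by rewrite -rpredN opprB opprD addrACA rpredD ?repr_piB_subgroup.
Qed.
Canonical pi_quot_add_morph := PiMorph2 pi_quot_add.

Lemma quot_addA : associative quot_add.
Proof. by elim/quotW=> x; elim/quotW=> y; elim/quotW=> z; rewrite !piE addrA. Qed.

Lemma quot_addC : commutative quot_add.
Proof. by elim/quotW=> x; elim/quotW=> y; rewrite !piE addrC. Qed.

Lemma quot_add0 : left_id quot_zero quot_add.
Proof. by elim/quotW=> x; rewrite !piE add0r. Qed.

Lemma quot_addN : left_inverse quot_zero quot_opp quot_add.
Proof. by elim/quotW=> x; rewrite !piE addNr. Qed.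

HB.instance Definition _ :=
  GRing.isZmodule.Build Q quot_addA quot_addC quot_add0 quot_addN.

Definition pi_subgroup (x : G) : Q := \pi_Q x.

Lemma pi_subgroup_is_zmod_morphism : zmod_morphism pi_subgroup.
Proof. by move=> x y; rewrite /pi_subgroup !piE. Qed.

HB.instance Definition _ :=
  GRing.isZmodMorphism.Build G Q pi_subgroup pi_subgroup_is_zmod_morphism.

Lemma pi_subgroup_eq0 x : pi_subgroup x = 0 <-> x \in S.
Proof.
have pi0 : \pi_Q 0 = 0 by rewrite piE.
by rewrite /pi_subgroup -pi0 -[x in x \in S]subr0; apply: rwP; apply: eqmod_subgroupP.
Qed.

Lemma pi_subgroup_surj (y : Q) : exists x, pi_subgroup x = y.
Proof. by exists (repr y); rewrite /pi_subgroup reprK. Qed.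

End SubgroupQuotient.

Section TotalPreorderQuotient.
Variables (T : choiceType) (r : T -> T -> Prop).
(* Bundled, so that the carrier of the quotient mentions every hypothesis its
   order instance depends on. *)
Hypothesis r_total_preorder : quasi_order r /\ total_rel r.
Let r_refl : forall x, r x x := proj1 (proj1 r_total_preorder).
Let r_trans : forall x y z, r x y -> r y z -> r x z := proj2 (proj1 r_total_preorder).
Let r_total : total_rel r := proj2 r_total_preorder.

Definition qsimb : rel T := fun x y => `[< qsim r x y >].

Lemma qsimb_refl : reflexive qsimb.
Proof. by move=> x; apply/asboolP; split; apply: r_refl. Qed.

Lemma qsimb_sym : symmetric qsimb.
Proof. by move=> x y; apply/asboolP/asboolP => -[]. Qed.

Lemma qsimb_trans : transitive qsimb.
Proof.
move=> y x z /asboolP[xy yx] /asboolP[yz zy].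
by apply/asboolP; split; [apply: r_trans yz|apply: r_trans yx].
Qed.

Canonical qsimb_equiv := EquivRel qsimb qsimb_refl qsimb_sym qsimb_trans.

Definition preorder_quot := {eq_quot qsimb}.
HB.instance Definition _ := Choice.on preorder_quot.
HB.instance Definition _ := EqQuotient.on preorder_quot.

Local Notation Q := preorder_quot.

Lemma repr_pi_qsim x : qsim r (repr (\pi_Q x)) x.
Proof. by apply/asboolP; apply/(@eqquotP _ qsimb Q); rewrite reprK. Qed.

Definition preorder_quot_le (x y : Q) : bool := `[< r (repr x) (repr y) >].

Lemma preorder_quot_le_pi x y : preorder_quot_le (\pi x) (\pi y) <-> r x y.
Proof.
have [rx xr] := repr_pi_qsim x; have [ry yr] := repr_pi_qsim y.
split=> [/asboolP rxy|xy]; first exact: r_trans xr (r_trans rxy ry).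
by apply/asboolP; apply: r_trans rx (r_trans xy yr).
Qed.

Lemma preorder_quot_le_refl : reflexive preorder_quot_le.
Proof. by elim/quotW=> x; apply/preorder_quot_le_pi. Qed.

Lemma preorder_quot_le_anti : antisymmetric preorder_quot_le.
Proof.
elim/quotW=> x; elim/quotW=> y /andP[/preorder_quot_le_pi xy /preorder_quot_le_pi yx].
by apply/eqquotP/asboolP.
Qed.

Lemma preorder_quot_le_trans : transitive preorder_quot_le.
Proof.
elim/quotW=> y; elim/quotW=> x; elim/quotW=> z /preorder_quot_le_pi xy /preorder_quot_le_pi yz.
by apply/preorder_quot_le_pi; apply: r_trans yz.
Qed.

Lemma preorder_quot_le_total : total preorder_quot_le.
Proof.
elim/quotW=> x; elim/quotW=> y.
by case: (r_total x y) => [/preorder_quot_le_pi ->|/preorder_quot_le_pi ->]; rewrite ?orbT.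
Qed.

HB.instance Definition _ := Order.Le_isPOrder.Build (Order.Disp tt tt) Q
  preorder_quot_le_refl preorder_quot_le_anti preorder_quot_le_trans.
HB.instance Definition _ :=
  Order.POrder_isTotal.Build (Order.Disp tt tt) Q preorder_quot_le_total.

End TotalPreorderQuotient.

Section ValuationOrderCompatible.
Variables (G A F : zmodType) (iota : {additive A -> G}) (pi : {additive G -> F}).
Variables (leo : A -> A -> Prop) (d : Order.disp_t) (Gam : orderType d).
Variables (v : F -> option Gam) (le : G -> G -> Prop).
Hypotheses (iota_pi_exact : short_exact iota pi) (leo_order : group_order leo).
Hypothesis v_valuation : valuation v.
Hypothesis leE : forall g h : G,
  le g h <->
  ((exists a b : A, iota a = g /\ iota b = h /\ leo a b) \/
   ((~ exists b : A, iota b = h) /\ ole (v (pi h)) (v (pi g)))).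

Local Notation in_iota g := (exists a : A, iota a = g).

Lemma in_iotaE g : in_iota g <-> pi g = 0.
Proof. by have [_ [_ ->]] := iota_pi_exact. Qed.

Lemma v_pi_neq_none g : ~ in_iota g -> v (pi g) <> None.
Proof. by move=> ng /(proj1 v_valuation) /in_iotaE. Qed.

Lemma qsim_of_v_eq y z :
  ~ in_iota y -> ~ in_iota z -> v (pi y) = v (pi z) -> qsim le y z.
Proof. by move=> ny nz vyz; split; apply/leE; right; rewrite vyz; split=> //; apply: ole_refl. Qed.

Lemma le_sim0 x : qsim le x 0 -> x = 0.
Proof.
have [iota_inj _] := iota_pi_exact; have [_ [leo_anti _]] := leo_order.
have iota_eq0 a : iota a = 0 -> a = 0 by move=> ?; apply: iota_inj; rewrite raddf0.
case=> /leE[[a [b [<- [/iota_eq0 -> a0]]]]|[n0 _]]; last first.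
  by case: n0; exists 0; rewrite raddf0.
case/leE=> [[c [a' [/iota_eq0 -> [/iota_inj -> a0']]]]|[nx _]]; last by case: nx; exists a.
by rewrite (leo_anti _ _ a0 a0') raddf0.
Qed.

Lemma le_add_in_iota a b z : leo a b -> le (iota a + z) (iota b + z).
Proof.
move=> ab; have [_ [_ [_ [_ leoD]]]] := leo_order.
have [[c <-]|nz] := pselect (in_iota z).
  by apply/leE; left; exists (a + c), (b + c); rewrite !raddfD; split; [|split; [|apply: leoD]].
apply/leE; right; split.
  by case=> c bz; apply: nz; exists (c - b); rewrite raddfB bz addrC addKr.
have pi_iota c : pi (iota c) = 0 by apply/in_iotaE; exists c.
by rewrite !raddfD !pi_iota; apply: ole_refl.
Qed.

Lemma le_add_out_iota x y z :
  ~ in_iota y -> ole (v (pi y)) (v (pi x)) -> ~ qsim le y z -> le (x + z) (y + z).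
Proof.
move=> ny yx nyz; have [v0 [vD vN]] := v_valuation.
have v_neq : v (pi z) <> v (pi y).
  move=> zy; apply/nyz/qsim_of_v_eq => // /in_iotaE /v0.
  by rewrite zy => /(v_pi_neq_none ny).
apply/leE; right; split.
  move=> /in_iotaE; rewrite raddfD => /eqP; rewrite addr_eq0 => /eqP pz.
  by apply: v_neq; rewrite pz vN.
rewrite !raddfD; have [zy|nzy] := pselect (ole (v (pi z)) (v (pi y))).
  have nyz_v : ~ ole (v (pi y)) (v (pi z)) by move=> yz; apply: v_neq; apply: ole_anti.
  have nxz : ~ ole (v (pi x)) (v (pi z)) by move=> xz; apply: nyz_v; apply: ole_trans xz.
  by rewrite (valuationD_strict v_valuation nyz_v) (valuationD_strict v_valuation nxz); apply: ole_refl.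
have yz : ole (v (pi y)) (v (pi z)) by case: (ole_total (v (pi z)) (v (pi y))).
rewrite [pi y + _]addrC (valuationD_strict v_valuation nzy); apply: ole_trans (vD _ _).
by case: (omin_cases (v (pi x)) (v (pi z))) => -[-> _].
Qed.

Lemma valuation_order_compatible : compatible_add le.
Proof.
split; first exact: le_sim0.
move=> x y z /leE[[a [b [<- [<- ab]]]] _|[ny yx]]; first exact: le_add_in_iota.
exact: le_add_out_iota.
Qed.

End ValuationOrderCompatible.

Section CompatibleQuasiOrder.
Variables (G : zmodType) (le : G -> G -> Prop).
Local Notation "x ≾ y" := (le x y) (at level 70).
Local Notation "x ∼ y" := (qsim le x y) (at level 70).
Local Notation "x ≺ y" := (~ le y x) (at level 70).

Hypotheses (le_refl : forall x, x ≾ x) (le_trans : forall x y z, x ≾ y -> y ≾ z -> x ≾ z).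
Hypothesis le_total : forall x y, x ≾ y \/ y ≾ x.
Hypothesis sim0 : forall x, x ∼ 0 -> x = 0.
Hypothesis le_add : forall x y z, x ≾ y -> ~ y ∼ z -> x + z ≾ y + z.

Lemma le_anti0 x : x ≾ 0 -> 0 ≾ x -> x = 0.
Proof. by move=> x_le0 x_ge0; apply: sim0. Qed.

Lemma lt_le x y : x ≺ y -> x ≾ y.
Proof. by case: (le_total x y). Qed.

Lemma le0_oppr_gt0 x : x ≾ 0 -> x <> 0 -> 0 ≺ - x.
Proof.
move=> x_le0 x_neq0 Nx_le0; have Nx_neq0 : - x <> 0 by move/eqP; rewrite oppr_eq0 => /eqP.
have n0Nx : ~ 0 ∼ - x by case=> ? ?; apply: Nx_neq0; apply: le_anti0.
have := le_add x_le0 n0Nx; rewrite subrr add0r => Nx_ge0.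
exact: Nx_neq0 (le_anti0 Nx_le0 Nx_ge0).
Qed.

Lemma ge0_oppr_le0 x : ~ x ∼ - x -> 0 ≾ x -> - x ≾ 0.
Proof. by move=> nx /le_add /(_ nx); rewrite add0r subrr. Qed.

Lemma le_sub0 x y : x ≾ y -> ~ y ∼ - y -> x - y ≾ 0.
Proof. by move=> /le_add h /h; rewrite subrr. Qed.

Definition oriented (x : G) : Prop := x ∼ - x -> x = 0.

Lemma unoriented_sim x : ~ oriented x -> x ∼ - x /\ x <> 0.
Proof. by move/not_implyP. Qed.

Lemma oriented_nsim x : oriented x -> x <> 0 -> ~ x ∼ - x.
Proof. by move=> ox nx0 /ox. Qed.

Lemma oriented0 : oriented 0.
Proof. by []. Qed.

Lemma orientedN x : oriented x -> oriented (- x).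
Proof. by move=> ox; rewrite /oriented opprK => -[? ?]; rewrite ox ?oppr0. Qed.

Lemma unorientedN x : ~ oriented x -> ~ oriented (- x).
Proof. by move=> nx /orientedN; rewrite opprK. Qed.

Lemma unoriented_gt0 y : ~ oriented y -> 0 ≺ y.
Proof.
move=> /unoriented_sim[[_ Ny_le_y] y_neq0] y_le0.
by apply: (le0_oppr_gt0 y_le0 y_neq0); apply: le_trans Ny_le_y y_le0.
Qed.

Lemma le0_oriented x : x ≾ 0 -> x <> 0 -> oriented x.
Proof.
move=> x_le0 x_neq0 [_ Nx_le_x]; exfalso.
by apply: (le0_oppr_gt0 x_le0 x_neq0); apply: le_trans Nx_le_x x_le0.
Qed.

Lemma oppr_le0_oriented x : - x ≾ 0 -> x <> 0 -> oriented x.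
Proof.
move=> Nx_le0 x_neq0; rewrite -[x]opprK; apply/orientedN/le0_oriented => //.
by move/eqP; rewrite oppr_eq0 => /eqP.
Qed.

Lemma oriented_sim_eq x z : oriented x -> oriented z -> x ∼ z -> x = z.
Proof.
move=> ox oz [xz zx].
have [x0|/eqP x_neq0] := eqVneq x 0.
  by move: xz zx; rewrite x0 => ? ?; apply/esym/le_anti0.
have [z0|/eqP z_neq0] := eqVneq z 0.
  by move: xz zx; rewrite z0 => ? ?; apply: le_anti0.
have xz_le0 := le_sub0 xz (oriented_nsim oz z_neq0).
have zx_le0 := le_sub0 zx (oriented_nsim ox x_neq0).
have [/eqP|/eqP xz_neq0] := eqVneq (x - z) 0; first by rewrite subr_eq0 => /eqP.
by have := le0_oppr_gt0 xz_le0 xz_neq0; rewrite opprB => /(_ zx_le0).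
Qed.

Lemma sim_unoriented x y : ~ oriented y -> x ∼ y -> ~ oriented x.
Proof.
move=> ny [xy yx] ox.
have [[y_le_Ny Ny_le_y] y_neq0] := unoriented_sim ny.
have y_gt0 := unoriented_gt0 ny; have Ny_gt0 := unoriented_gt0 (unorientedN ny).
have x_neq0 : x <> 0 by move=> x0; apply: y_gt0; rewrite -x0.
have nx := oriented_nsim ox x_neq0.
have Nx_le0 : - x ≾ 0 by apply: ge0_oppr_le0 nx (le_trans (lt_le y_gt0) yx).
have Nyx_le0 : - y - x ≾ 0 := le_sub0 (le_trans Ny_le_y yx) nx.
have Nyx_ge0 : 0 ≾ - y - x.
  have nNyx : ~ - y ∼ - x by case=> Ny_le_Nx _; apply: Ny_gt0; apply: le_trans Ny_le_Nx Nx_le0.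
  by have := le_add (le_trans xy y_le_Ny) nNyx; rewrite subrr.
have /eqP : - y - x = 0 := le_anti0 Nyx_le0 Nyx_ge0.
by rewrite subr_eq0 => /eqP xE; apply: nx; rewrite -xE opprK.
Qed.

Lemma oriented_not_gt_unoriented x y : oriented x -> ~ oriented y -> ~ y ≺ x.
Proof.
move=> ox ny nxy.
have [[y_le_Ny Ny_le_y] y_neq0] := unoriented_sim ny.
have yx := lt_le nxy.
have x_neq0 : x <> 0 by move=> x0; apply: (unoriented_gt0 ny); rewrite -x0.
have nx := oriented_nsim ox x_neq0.
have nyx : ~ y ∼ x by case=> _.
have nNyx : ~ - y ∼ x by case=> _ xNy; apply: nxy; apply: le_trans xNy Ny_le_y.
have sum_sim : x + y ∼ x - y.
  by split; [have := le_add y_le_Ny nNyx|have := le_add Ny_le_y nyx]; rewrite !(addrC x).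
have o_sum : oriented (x + y).
  apply: oppr_le0_oriented; first by rewrite opprD addrC; apply: le_sub0 (le_trans Ny_le_y yx) nx.
  by move/eqP; rewrite addr_eq0 => /eqP xNy; apply: nxy; rewrite xNy.
have o_diff : oriented (x - y).
  apply: oppr_le0_oriented; first by rewrite opprB; apply: le_sub0 yx nx.
  by move/eqP; rewrite subr_eq0 => /eqP xy; apply: nxy; rewrite xy.
have diffE := oriented_sim_eq o_sum o_diff sum_sim.
have nx_sim : ~ x ∼ x + y.
  move=> /(oriented_sim_eq ox o_sum) xE; apply: y_neq0; apply: (addrI x).
  by rewrite addr0 -xE.
have [x_le_sum|sum_le_x] := le_total x (x + y).
- have x_lt_sum : x ≺ x + y by move=> ?; apply: nx_sim.
  have nsNy : ~ x + y ∼ - y.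
    by case=> sNy _; apply: x_lt_sum; apply: le_trans sNy (le_trans Ny_le_y yx).
  by apply: x_lt_sum; have := le_add x_le_sum nsNy; rewrite addrK -diffE.
- have sum_lt_x : x + y ≺ x by move=> ?; apply: nx_sim.
  have nxNy : ~ x ∼ - y by case=> xNy _; apply: nxy; apply: le_trans xNy Ny_le_y.
  by apply: sum_lt_x; have := le_add sum_le_x nxNy; rewrite addrK -diffE.
Qed.

Lemma oriented_lt_unoriented x y : oriented x -> ~ oriented y -> x ≺ y.
Proof.
move=> ox ny yx; have [xy|nxy] := pselect (x ≾ y).
  exact: sim_unoriented ny (conj xy yx) ox.
exact: oriented_not_gt_unoriented ox ny nxy.
Qed.

Lemma orientedD a b : oriented a -> oriented b -> oriented (a + b).
Proof.
move=> oa ob; apply: contrapT => nab.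
have nNab := unorientedN nab; have oNb := orientedN ob.
have [a0|/eqP a_neq0] := eqVneq a 0; first by apply: nab; rewrite a0 add0r.
have a_ge0 : 0 ≾ a.
  have nabNb : ~ a + b ∼ - b by case=> + _; apply: oriented_lt_unoriented oNb nab.
  by have := le_add (lt_le (oriented_lt_unoriented ob nab)) nabNb; rewrite subrr addrK.
have Na_ge0 : 0 ≾ - a.
  have nNabb : ~ - (a + b) ∼ b by case=> + _; apply: oriented_lt_unoriented ob nNab.
  have := le_add (lt_le (oriented_lt_unoriented oNb nNab)) nNabb.
  by rewrite addNr opprD subrK.
have /eqP : - a = 0 := le_anti0 (ge0_oppr_le0 (oriented_nsim oa a_neq0) a_ge0) Na_ge0.
by rewrite oppr_eq0 => /eqP.
Qed.

Lemma oriented_le_double a : oriented a -> 0 ≾ a -> a ≾ a + a.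
Proof.
move=> oa a_ge0; have [->|/eqP a_neq0] := eqVneq a 0; first by rewrite addr0.
have na := oriented_nsim oa a_neq0.
have n0aa : ~ 0 ∼ a + a.
  case=> ge0_aa le0_aa; have /eqP := le_anti0 le0_aa ge0_aa.
  by rewrite addr_eq0 => /eqP aE; apply: na; rewrite -aE; split; apply: le_refl.
by have := le_add (ge0_oppr_le0 na a_ge0) n0aa; rewrite addKr add0r.
Qed.

Lemma oriented_ge0 a : oriented a -> - a ≾ a -> 0 ≾ a.
Proof.
move=> oa Na_le_a; have [->|/eqP a_neq0] := eqVneq a 0; first exact: le_refl.
case: (le_total 0 a) => // a_le0.
have Na_neq0 : - a <> 0 by move/eqP; rewrite oppr_eq0 => /eqP.
by have := le0_oppr_gt0 (le_trans Na_le_a a_le0) Na_neq0; rewrite opprK.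
Qed.

Lemma oriented_le_subE a b : oriented a -> oriented b -> a ≾ b <-> 0 ≾ b - a.
Proof.
move=> oa ob; split=> [ab|ba_ge0].
- have [bNa|nbNa] := pselect (b ∼ - a); last by have := le_add ab nbNa; rewrite subrr.
  have aE : a = - b by rewrite (oriented_sim_eq ob (orientedN oa) bNa) opprK.
  have b_ge0 : 0 ≾ b by apply: (oriented_ge0 ob); rewrite -aE.
  by rewrite aE opprK; apply: le_trans b_ge0 (oriented_le_double ob b_ge0).
- have [baa|nbaa] := pselect (b - a ∼ a); last by have := le_add ba_ge0 nbaa; rewrite add0r subrK.
  have baE := oriented_sim_eq (orientedD ob (orientedN oa)) oa baa.
  rewrite baE in ba_ge0; rewrite -[b](subrK a) baE.
  exact: oriented_le_double oa ba_ge0.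
Qed.

Lemma unorientedDr g a : ~ oriented g -> oriented a -> ~ oriented (g + a).
Proof. by move=> ng oa oga; apply: ng; have := orientedD oga (orientedN oa); rewrite addrK. Qed.

Lemma unoriented_le_addr g b : ~ oriented g -> oriented b -> 0 ≾ b -> g ≾ g + b.
Proof.
move=> ng ob b_ge0; have nbg : ~ b ∼ g by case=> _; apply: oriented_lt_unoriented ob ng.
by have := le_add b_ge0 nbg; rewrite add0r addrC.
Qed.

Lemma unoriented_addr_le g b : ~ oriented g -> oriented b -> b ≾ 0 -> g + b ≾ g.
Proof.
move=> ng ob b_le0; have n0g : ~ 0 ∼ g by case=> _; apply: oriented_lt_unoriented oriented0 ng.
by have := le_add b_le0 n0g; rewrite add0r addrC.
Qed.

Lemma unoriented_addr_sim g a : ~ oriented g -> oriented a -> g + a ∼ g.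
Proof.
move=> ng oa; have [->|/eqP a_neq0] := eqVneq a 0; first by rewrite addr0; split; apply: le_refl.
have na := oriented_nsim oa a_neq0.
have [[g_le_Ng Ng_le_g] _] := unoriented_sim ng.
have [[ga_le_N Nga_le] _] := unoriented_sim (unorientedDr ng oa).
have [a_ge0|a_le0] := le_total 0 a.
- split; last exact: unoriented_le_addr.
  have := unoriented_addr_le (unorientedN ng) (orientedN oa) (ge0_oppr_le0 na a_ge0).
  by rewrite -opprD => h; apply: le_trans ga_le_N (le_trans h Ng_le_g).
- split; first exact: unoriented_addr_le.
  have Na_ge0 := lt_le (le0_oppr_gt0 a_le0 a_neq0).
  have := unoriented_le_addr (unorientedN ng) (orientedN oa) Na_ge0.
  by rewrite -opprD => h; apply: le_trans g_le_Ng (le_trans h Nga_le).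
Qed.

Lemma unoriented_lt_addr_sim y k : ~ oriented y -> y ≺ k -> k + y ∼ k.
Proof.
move=> ny yk; have [[_ Ny_le_y] _] := unoriented_sim ny.
have k_le_ky : k ≾ k + y.
  have nyk : ~ y ∼ k by case=> _.
  by have := le_add (lt_le (unoriented_gt0 ny)) nyk; rewrite add0r addrC.
split=> //.
have nNyky : ~ - y ∼ k + y.
  by case=> _ kyNy; apply: yk; apply: le_trans k_le_ky (le_trans kyNy Ny_le_y).
by have := le_add (lt_le (unoriented_gt0 (unorientedN ny))) nNyky; rewrite add0r addrCA addNr addr0.
Qed.

Lemma unoriented_add_le g h : ~ oriented g -> g ≾ h -> g + h ≾ h.
Proof.
move=> ng gh; apply: contrapT => nghh.
have [[_ Ng_le_g] _] := unoriented_sim ng.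
have Ng_lt_gh : - g ≺ g + h.
  by move=> ghNg; apply: nghh; apply: le_trans ghNg (le_trans Ng_le_g gh).
by have [_] := unoriented_lt_addr_sim (unorientedN ng) Ng_lt_gh; rewrite addrAC subrr add0r.
Qed.

Definition ordered_part : pred G := fun g => `[< oriented g >].

Lemma ordered_partP g : reflect (oriented g) (g \in ordered_part).
Proof. exact: asboolP. Qed.

Lemma ordered_part_zmod_closed : zmod_closed ordered_part.
Proof.
split; first exact/ordered_partP/oriented0.
by move=> x y /ordered_partP ox /ordered_partP oy; apply/ordered_partP/orientedD/orientedN.
Qed.

HB.instance Definition _ :=
  GRing.isZmodClosed.Build G ordered_part ordered_part_zmod_closed.

Definition ordered_subgroup := {x | x \in ordered_part}.
HB.instance Definition _ := [isSub for (@sval _ _ : ordered_subgroup -> G)].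
HB.instance Definition _ := [Choice of ordered_subgroup by <:].
HB.instance Definition _ := [SubChoice_isSubZmodule of ordered_subgroup by <:].

Local Notation ordered_part_closed := (GRing.ZmodClosed.clone G ordered_part _).
Local Notation F := (quot_subgroup ordered_part_closed).
Local Notation pi := (pi_subgroup ordered_part_closed).

Lemma ge_total_preorder : quasi_order (fun x y => y ≾ x) /\ total_rel (fun x y => y ≾ x).
Proof.
split; first by split=> // x y z xy yz; apply: le_trans yz xy.
by move=> x y; case: (le_total y x); [left|right].
Qed.

Definition value_set := preorder_quot ge_total_preorder.

Definition value (g : G) : option value_set :=
  if g \in ordered_part then None else Some (\pi g).

Definition quot_value (f : F) : option value_set := value (repr f).

Lemma value_None g : value g = None <-> oriented g.
Proof. by rewrite /value; case: ordered_partP. Qed.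

Lemma value_Some g : ~ oriented g -> value g = Some (\pi g).
Proof. by rewrite /value; case: ordered_partP. Qed.

Lemma pi_value_set g h : g ∼ h -> \pi_value_set g = \pi h.
Proof. by move=> [gh hg]; apply/eqquotP/asboolP. Qed.

Lemma value_addr g a : oriented a -> value (g + a) = value g.
Proof.
move=> oa; have [og|ng] := pselect (oriented g).
  by rewrite (proj2 (value_None _) og) (proj2 (value_None _) (orientedD og oa)).
by rewrite (value_Some (unorientedDr ng oa)) (value_Some ng) (pi_value_set (unoriented_addr_sim ng oa)).
Qed.

Lemma quot_value_pi g : quot_value (pi g) = value g.
Proof.
have /ordered_partP oa := repr_piB_subgroup ordered_part_closed g.
by rewrite /quot_value -(value_addr g oa) [g + _]addrC subrK.
Qed.

Lemma valueN g : value (- g) = value g.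
Proof.
have [og|ng] := pselect (oriented g).
  by rewrite (proj2 (value_None _) og) (proj2 (value_None _) (orientedN og)).
have [[g_le_Ng Ng_le_g] _] := unoriented_sim ng.
by rewrite (value_Some ng) (value_Some (unorientedN ng)) (pi_value_set (conj Ng_le_g g_le_Ng)).
Qed.

Lemma ole_value g h : ~ oriented g -> ~ oriented h -> ole (value h) (value g) <-> g ≾ h.
Proof.
by move=> ng nh; rewrite (value_Some ng) (value_Some nh); apply: preorder_quot_le_pi.
Qed.

Lemma valueD g h : ole (omin (value g) (value h)) (value (g + h)).
Proof.
have [ogh|ngh] := pselect (oriented (g + h)); first by rewrite (proj2 (value_None _) ogh).
have [og|ng] := pselect (oriented g).
  by rewrite (proj2 (value_None _) og) addrC value_addr //; apply: ole_refl.
have [oh|nh] := pselect (oriented h).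
  by rewrite (proj2 (value_None _) oh) value_addr //; case: (value g) => *; apply: ole_refl.
have [gh|hg] := le_total g h.
- have := unoriented_add_le ng gh; rewrite -(ole_value ngh nh); apply: ole_trans.
  by case: (omin_cases (value g) (value h)) => -[-> ?] //; apply: ole_refl.
- have := unoriented_add_le nh hg; rewrite addrC -(ole_value ngh ng); apply: ole_trans.
  by case: (omin_cases (value g) (value h)) => -[-> ?] //; apply: ole_refl.
Qed.

Lemma ordered_subgroupP g : (exists a : ordered_subgroup, val a = g) <-> oriented g.
Proof.
split=> [[a <-]|og]; first exact/ordered_partP/valP.
by exists (exist _ g (introT (ordered_partP g) og)).
Qed.

Lemma ordered_part_short_exact : short_exact (A := ordered_subgroup) val pi.
Proof.
split; first exact: val_inj.
split; first exact: pi_subgroup_surj.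
by move=> g; rewrite ordered_subgroupP pi_subgroup_eq0; split=> /ordered_partP.
Qed.

Lemma ordered_subgroup_group_order :
  group_order (fun a b : ordered_subgroup => val a ≾ val b).
Proof.
have oval (a : ordered_subgroup) : oriented (val a) by apply/ordered_partP/valP.
split; first by move=> a.
split; first by move=> a b ab ba; apply: val_inj; apply: oriented_sim_eq (oval a) (oval b) _.
split; first by move=> a b c; apply: le_trans.
split; first by move=> a b; apply: le_total.
move=> a b c /(oriented_le_subE (oval a) (oval b)) ab.
apply/(oriented_le_subE (oval (a + c)) (oval (b + c))).
by rewrite !GRing.valD opprD addrACA subrr addr0.
Qed.

Lemma quot_value_valuation : valuation quot_value.
Proof.
split; last split.
- move=> f; have [g <-] := pi_subgroup_surj f.
  by rewrite quot_value_pi value_None pi_subgroup_eq0; split=> /ordered_partP.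
- move=> f f'; have [g <-] := pi_subgroup_surj f; have [h <-] := pi_subgroup_surj f'.
  by rewrite -raddfD !quot_value_pi; apply: valueD.
- by move=> f; have [g <-] := pi_subgroup_surj f; rewrite -raddfN !quot_value_pi valueN.
Qed.

Lemma le_ordered_decomposition g h :
  g ≾ h <->
  ((exists a b : ordered_subgroup, val a = g /\ val b = h /\ val a ≾ val b) \/
   ((~ exists b : ordered_subgroup, val b = h) /\
    ole (quot_value (pi h)) (quot_value (pi g)))).
Proof.
rewrite !quot_value_pi ordered_subgroupP.
have [og|ng] := pselect (oriented g); have [oh|nh] := pselect (oriented h).
- split=> [gh|[[a [b [<- [<- //]]]]|[]//]]; left.
  have [a ag] := proj2 (ordered_subgroupP g) og; have [b bh] := proj2 (ordered_subgroupP h) oh.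
  by exists a, b; rewrite ag bh.
- split=> [_|_]; last exact: lt_le (oriented_lt_unoriented og nh).
  by right; split=> //; rewrite (proj2 (value_None _) og).
- have hg := oriented_lt_unoriented oh ng.
  split=> [/hg[]|[[a [b [ag _]]]|[]//]].
  by case: ng; apply/ordered_subgroupP; exists a.
- split=> [gh|[[a [b [ag _]]]|[_ /(ole_value ng nh)//]]].
    by right; split=> //; apply/ole_value.
  by case: ng; apply/ordered_subgroupP; exists a.
Qed.

Lemma compatible_valuation_decomposition :
  exists (A F : zmodType) (iota : {additive A -> G}) (pi : {additive G -> F})
         (leo : A -> A -> Prop) (d : Order.disp_t) (Gam : orderType d)
         (v : F -> option Gam),
    short_exact iota pi /\ group_order leo /\ valuation v /\
    forall g h : G,
      g ≾ h <->
      ((exists a b : A, iota a = g /\ iota b = h /\ leo a b) \/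
       ((~ exists b : A, iota b = h) /\ ole (v (pi h)) (v (pi g)))).
Proof.
exists ordered_subgroup, F, val, pi, (fun a b => val a ≾ val b), _, value_set, quot_value.
split; first exact: ordered_part_short_exact.
split; first exact: ordered_subgroup_group_order.
split; first exact: quot_value_valuation.
exact: le_ordered_decomposition.
Qed.

End CompatibleQuasiOrder.

Theorem mainTheorem3 (G : zmodType) (le : G -> G -> Prop) :
  quasi_order le -> total_rel le ->
  (compatible_add le <->
   exists (A F : zmodType) (iota : {additive A -> G}) (pi : {additive G -> F})
          (leo : A -> A -> Prop) (d : Order.disp_t) (Gam : orderType d)
          (v : F -> option Gam),
     short_exact iota pi /\ group_order leo /\ valuation v /\
     forall g h : G,
       le g h <->
       ((exists a b : A, iota a = g /\ iota b = h /\ leo a b) \/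
        ((~ exists b : A, iota b = h) /\ ole (v (pi h)) (v (pi g))))).
Proof.
move=> [le_refl le_trans] le_total; split.
  by case=> sim0 le_add; apply: compatible_valuation_decomposition.
move=> [A [F [iota [pi [leo [d [Gam [v [iota_pi_exact [leo_order [v_valuation leE]]]]]]]]]]].
exact: valuation_order_compatible iota_pi_exact leo_order v_valuation leE.
Qed.
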